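(* Suppose the event $E_{\tau,small}$ described in the context occurs. Let $\kappa_g>0$ be an upper bound for $\{\|g_k\|_2\}$. Then, with $\kappa_d>0$ as in the context, for any $k \geq \bar k_{\tau,\xi}$, \[ \mathbb{E}_k[\bar\alpha_k \bar\tau_k g_k^T (\bar d_k - d_k)] \leq \beta_k^2\, \theta\, \bar\tau_{\min}\, \kappa_g\, \kappa_d \sqrt{M}. \]
   Context: Problem: $\min_{x\in\mathbb{R}^n} f(x)$ s.t. $c(x)=0$, with $f(x)=\mathbb{E}[F(x,\omega)]$, $c:\mathbb{R}^n\to\mathbb{R}^m$ deterministic. Assumptions: there is an open convex set $\mathcal{X}$ containing all iterates and trial points; $f$ is continuously differentiable and bounded below over $\mathcal{X}$, $\nabla f$ is bounded and Lipschitz with constant $L$ over $\mathcal{X}$; $c$ and its Jacobian $J=\nabla c^T$ are bounded over $\mathcal{X}$, each $\nabla c_i$ is Lipschitz with constant $\gamma_i$, $\Gamma:=\sum_{i=1}^m\gamma_i$, and the singular values of $J$ are bounded away from zero over $\mathcal{X}$. The deterministic matrices $H_k\in\mathbb{S}^n$ satisfy $\|H_k\|_2\le\kappa_H$ and $u^TH_ku\ge\zeta\|u\|_2^2$ for all $u$ with $J_ku=0$. Notation: $g_k=\nabla f(x_k)$, $c_k=c(x_k)$, $J_k=\nabla c(x_k)^T$; $\bar g_k$ is a stochastic gradient estimate. Model reduction $\Delta q(x,\tau,g,H,d)=-\tau(g^Td+\tfrac12\max\{d^THd,0\})+\|c(x)\|_1$. Algorithm (stochastic SQP, inputs $\bar\tau_{-1},\bar\xi_{-1}>0$,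 $\epsilon,\sigma\in(0,1)$, $\{\beta_k\}\subset(0,1]$, $\theta\ge0$, Lipschitz constants $L,\Gamma$): at iteration $k$, solve $\begin{bmatrix}H_k & J_k^T\\ J_k & 0\end{bmatrix}\begin{bmatrix}\bar d_k\\ \bar y_k\end{bmatrix}=-\begin{bmatrix}\bar g_k\\ c_k\end{bmatrix}$. Set $\bar\tau_k^{trial}=\infty$ if $\bar g_k^T\bar d_k+\max\{\bar d_k^TH_k\bar d_k,0\}\le0$, else $(1-\sigma)\|c_k\|_1/(\bar g_k^T\bar d_k+\max\{\bar d_k^TH_k\bar d_k,0\})$; $\bar\tau_k=\bar\tau_{k-1}$ if $\bar\tau_{k-1}\le\bar\tau_k^{trial}$, else $(1-\epsilon)\bar\tau_k^{trial}$. Set $\bar\xi_k^{trial}=\Delta q(x_k,\bar\tau_k,\bar g_k,H_k,\bar d_k)/(\bar\tau_k\|\bar d_k\|_2^2)$, $\bar\xi_k=\bar\xi_{k-1}$ if $\bar\xi_{k-1}\le\bar\xi_k^{trial}$, else $(1-\epsilon)\bar\xi_k^{trial}$. The stepsize $\bar\alpha_k$ is chosen (by projecting candidate values $\beta_k\Delta q(x_k,\bar\tau_k,\bar g_k,H_k,\bar d_k)/((\bar\tau_kL+\Gamma)\|\bar d_k\|_2^2)$ and that value minus $4\|c_k\|_1/((\bar\tau_kL+\Gamma)\|\bar d_k\|_2^2)$, and selecting among them or $1$) so that it always lies in $[\bar\alpha_{k,\min},\bar\alpha_{k,\max}]=[\beta_k\bar\xi_k\bar\tau_k/(\bar\tau_kL+\Gamma),\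 \beta_k\bar\xi_k\bar\tau_k/(\bar\tau_kL+\Gamma)+\theta\beta_k^2]$; $x_{k+1}=x_k+\bar\alpha_k\bar d_k$. The deterministic direction $d_k$ solves the same linear system with $g_k$ in place of $\bar g_k$, and $\tau_k^{trial}$ is the trial formula with $(g_k,d_k)$. Event $E_{\tau,small}$: there exist $\bar k_{\tau,\xi}\in\mathbb{N}$, $\bar\tau_{\min}>0$ with $\bar\tau_k=\bar\tau_{\min}\le\tau_k^{trial}$ and $\bar\xi_k=\bar\xi_{\min}$ for all $k\ge\bar k_{\tau,\xi}$; and $\mathbb{E}_k$ denotes expectation conditioned on this event and on the algorithm reaching $x_k$, with $\mathbb{E}_k[\bar g_k]=g_k$, $\mathbb{E}_k[\|\bar g_k-g_k\|_2^2]\le M$. $\kappa_d>0$ is an upper bound (independent of $k$) on the norm of the inverse of $\begin{bmatrix}H_k & J_k^T\\ J_k & 0\end{bmatrix}$, giving $\mathbb{E}_k[\|\bar d_k-d_k\|_2]\le\kappa_d\sqrt M$. *)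

From HB Require Import structures.
From mathcomp Require Import all_boot all_order all_algebra.
From mathcomp Require Import all_classical all_reals all_analysis.
Set Implicit Arguments. Unset Strict Implicit. Unset Printing Implicit Defensive.
Import Order.TTheory GRing.Theory Num.Theory.
Local Open Scope ring_scope.

Definition norm2 {R : realType} {n : nat} (v : 'cV[R]_n) : R :=
  Num.sqrt (\sum_(i < n) (v i 0) ^+ 2).

Definition norm1 {R : realType} {n : nat} (v : 'cV[R]_n) : R :=
  \sum_(i < n) `|v i 0|.

Definition dotv {R : realType} {n : nat} (u v : 'cV[R]_n) : R :=
  (u^T *m v) 0 0.

Definition kkt {R : realType} {n m : nat} (H : 'M[R]_n) (J : 'M[R]_(m, n))
  : 'M[R]_(n + m) := block_mx H J^T J 0.

Definition tau_trial {R : realType} {n m : nat} (sigma : R) (H : 'M[R]_n)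
  (c : 'cV[R]_m) (g d : 'cV[R]_n) : \bar R :=
  let den := dotv g d + Num.max (dotv d (H *m d)) 0 in
  if den <= 0 then +oo%E else (((1 - sigma) * norm1 c) / den)%:E.

(* Write alpha_k tau_min = alpha_min tau_min + (alpha_k - alpha_min) tau_min, where
   0 <= alpha_k - alpha_min <= theta beta_k^2.  Subtracting the two saddle-point systems
   shows that dbar_k - d_k depends linearly on gbar_k - g_k, so g_k^T (dbar_k - d_k) has
   mean zero and the alpha_min part contributes nothing.  The remainder is at most
   theta beta_k^2 tau_min |g_k^T (dbar_k - d_k)|, and this absolute value is bounded by
   kappa_g kappa_d ||gbar_k - g_k||, so its mean is at most kappa_g kappa_d sqrt M by
   Jensen.  Cauchy-Schwarz and Jensen are both derived from 2 a b <= t a^2 + b^2 / t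
   by optimising over t > 0. *)

From HB Require Import structures.
From mathcomp Require Import all_boot all_order all_algebra.
From mathcomp Require Import all_classical all_reals all_analysis.
From mathcomp Require Import ring lra.
Import Order.TTheory GRing.Theory Num.Theory.
Local Open Scope ring_scope.

Lemma amgm_mul {R : realFieldType} (t a b : R) : 0 < t ->
  a * b <= (t * a ^+ 2 + b ^+ 2 / t) / 2.
Proof.
move=> t_gt0.
have : 0 <= (t * a - b) ^+ 2 / t by rewrite divr_ge0 ?sqr_ge0 ?ltW.
have -> : (t * a - b) ^+ 2 / t = t * a ^+ 2 - 2 * (a * b) + b ^+ 2 / t.
  by field; rewrite gt_eqF.
lra.
Qed.

Lemma le_mul_of_amgm {R : realFieldType} (a x y : R) : 0 <= x -> 0 <= y ->
  (forall t, 0 < t -> a <= (t * x ^+ 2 + y ^+ 2 / t) / 2) -> a <= x * y.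
Proof.
move=> x_ge0 y_ge0 amgm; apply/ler_addgt0Pr => e e_gt0.
pose eps := e / (x + y + 1).
have eps_gt0 : 0 < eps by rewrite divr_gt0 //; lra.
have xe_gt0 : 0 < x + eps by lra.
have ye_gt0 : 0 < y + eps by lra.
(* with t = (y + eps) / (x + eps) both terms of the bound are close to x * y *)
have := amgm _ (divr_gt0 ye_gt0 xe_gt0).
have lx : (y + eps) / (x + eps) * x ^+ 2 <= x * (y + eps).
  rewrite mulrAC ler_pdivrMr //.
  have := mulr_ge0 (mulr_ge0 x_ge0 (ltW eps_gt0)) (ltW ye_gt0); nra.
have ly : y ^+ 2 / ((y + eps) / (x + eps)) <= y * (x + eps).
  rewrite invf_div mulrA ler_pdivrMr //.
  have := mulr_ge0 (mulr_ge0 y_ge0 (ltW eps_gt0)) (ltW xe_gt0); nra.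
have : eps * (x + y) <= e.
  rewrite /eps mulrAC ler_pdivrMr; [nra|lra].
nra.
Qed.

Section vectors.
Context {R : realType} {n : nat}.
Implicit Types u v : 'cV[R]_n.

Lemma norm2_ge0 v : 0 <= norm2 v.
Proof. exact: sqrtr_ge0. Qed.

Lemma norm2_sqr v : norm2 v ^+ 2 = \sum_(i < n) v i 0 ^+ 2.
Proof. by rewrite sqr_sqrtr // sumr_ge0 // => i _; exact: sqr_ge0. Qed.

Lemma dotvE u v : dotv u v = \sum_(i < n) u i 0 * v i 0.
Proof. by rewrite /dotv mxE; apply: eq_bigr => i _; rewrite mxE. Qed.

Lemma abs_dotv_le u v : `|dotv u v| <= norm2 u * norm2 v.
Proof.
apply: le_mul_of_amgm; rewrite ?norm2_ge0 // => t t_gt0.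
rewrite dotvE !norm2_sqr mulr_sumr mulr_suml -big_split mulr_suml /=.
apply: le_trans (ler_norm_sum _ _ _) _; apply: ler_sum => i _.
by rewrite normrM -(real_normK (num_real (u i 0))) -(real_normK (num_real (v i 0))) amgm_mul.
Qed.

Lemma dotv_mulmxr {p : nat} u (B : 'M[R]_(n, p)) (v : 'cV[R]_p) :
  dotv u (B *m v) = dotv (B^T *m u) v.
Proof. by rewrite /dotv trmx_mul trmxK mulmxA. Qed.

Lemma dotvNl u v : dotv (- u) v = - dotv u v.
Proof. by rewrite /dotv linearN /= mulNmx mxE. Qed.

Lemma dotvNr u v : dotv u (- v) = - dotv u v.
Proof. by rewrite /dotv mulmxN mxE. Qed.

Lemma norm2N v : norm2 (- v) = norm2 v.
Proof. by rewrite /norm2; congr Num.sqrt; apply: eq_bigr => i _; rewrite mxE sqrrN. Qed.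

End vectors.

Lemma norm2_col_mx {R : realType} {n m : nat} (v : 'cV[R]_n) (w : 'cV[R]_m) :
  norm2 (col_mx v w) = Num.sqrt (norm2 v ^+ 2 + norm2 w ^+ 2).
Proof.
rewrite !norm2_sqr /norm2 big_split_ord /=.
by congr (Num.sqrt (_ + _)); apply: eq_bigr => i _; rewrite ?col_mxEu ?col_mxEd.
Qed.

Lemma col_mxB {V : zmodType} {m1 m2 n : nat} (A1 B1 : 'M[V]_(m1, n))
    (A2 B2 : 'M[V]_(m2, n)) :
  col_mx (A1 - B1) (A2 - B2) = col_mx A1 A2 - col_mx B1 B2.
Proof. by apply/matrixP => i j; rewrite !mxE; case: splitP => k _; rewrite !mxE. Qed.

Section saddle_point_systems.
Context {R : comUnitRingType} {n m : nat} {A : 'M[R]_(n + m)}.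
Hypothesis A_unit : A \in unitmx.
Context {u1 u2 a1 a2 : 'cV[R]_n} {v1 v2 b : 'cV[R]_m}.
Hypothesis sol1 : A *m col_mx u1 v1 = - col_mx a1 b.
Hypothesis sol2 : A *m col_mx u2 v2 = - col_mx a2 b.

Lemma sub_solutionE :
  col_mx (u1 - u2) (v1 - v2) = invmx A *m col_mx (a2 - a1) 0.
Proof.
rewrite col_mxB -[LHS](mulKmx A_unit) mulmxBr sol1 sol2.
by rewrite opprK addrC -col_mxB subrr.
Qed.

Lemma usub_sub_solutionE : u1 - u2 = ulsubmx (invmx A) *m (a2 - a1).
Proof.
rewrite -[u1 - u2](col_mxKu _ (v1 - v2)) sub_solutionE -mul_usub_mx.
by rewrite -[usubmx _]hsubmxK mul_row_col mulmx0 addr0.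
Qed.

End saddle_point_systems.

Lemma norm2_usub_sub_solution_le {R : realType} {n m : nat} {A : 'M[R]_(n + m)}
    {u1 u2 a1 a2 : 'cV[R]_n} {v1 v2 b : 'cV[R]_m} {k : R} :
  A \in unitmx ->
  A *m col_mx u1 v1 = - col_mx a1 b -> A *m col_mx u2 v2 = - col_mx a2 b ->
  (forall z, norm2 (invmx A *m z) <= k * norm2 z) ->
  norm2 (u1 - u2) <= k * norm2 (a1 - a2).
Proof.
move=> A_unit sol1 sol2 invA_bound.
rewrite -(norm2N (a1 - a2)) opprB.
have -> : norm2 (a2 - a1) = norm2 (col_mx (a2 - a1) (0 : 'cV_m)).
  have norm2_0 : norm2 (0 : 'cV[R]_m) = 0.
    by rewrite /norm2 big1 ?sqrtr0 // => i _; rewrite mxE expr0n.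
  by rewrite norm2_col_mx norm2_0 expr0n /= addr0 sqrtr_sqr ger0_norm ?sqrtr_ge0.
apply: le_trans (invA_bound _); rewrite -(sub_solutionE A_unit sol1 sol2) norm2_col_mx.
rewrite -[X in X <= _](ger0_norm (sqrtr_ge0 _)) -sqrtr_sqr.
by rewrite ler_wsqrtr // lerDl sqr_ge0.
Qed.

Lemma dotv_usub_sub_solution {R : realType} {n m : nat} {A : 'M[R]_(n + m)}
    {u1 u2 a1 a2 : 'cV[R]_n} {v1 v2 b : 'cV[R]_m} (c : 'cV[R]_n) :
  A \in unitmx ->
  A *m col_mx u1 v1 = - col_mx a1 b -> A *m col_mx u2 v2 = - col_mx a2 b ->
  dotv c (u1 - u2) = dotv (- ((ulsubmx (invmx A))^T *m c)) (a1 - a2).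
Proof.
move=> A_unit sol1 sol2.
by rewrite (usub_sub_solutionE A_unit sol1 sol2) -opprB mulmxN dotvNr dotv_mulmxr dotvNl.
Qed.

Section integrals.
Context {d : measure_display} {T : measurableType d} {R : realType}.
Local Open Scope ereal_scope.

Lemma integral_mul_centered_le (mu : measure T R) (alpha h : T -> R) (a0 delta : R) :
  measurable_fun setT alpha -> (forall w, (a0 <= alpha w <= a0 + delta)%R) ->
  mu.-integrable setT (EFin \o h) -> \int[mu]_w (h w)%:E = 0 ->
  \int[mu]_w (alpha w * h w)%:E <= delta%:E * \int[mu]_w `|h w|%:E.
Proof.
move=> alpha_meas alpha_range h_int h_mean.
have h_meas : measurable_fun setT h.
  exact/measurable_realfun.measurable_EFinP/(measurable_int mu h_int).
have habs_int : mu.-integrable setT (fun w => `|h w|%:E) := integrable_norm h_int.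
have alpha_abs w : (`|alpha w| <= `|a0| + delta)%R.
  have /andP[lo hi] := alpha_range w.
  have := ler_norm a0; have := ler_norm (- a0); rewrite normrN ler_norml; lra.
have ah_int : mu.-integrable setT (fun w => (alpha w * h w)%:E).
  apply: (le_integrable _ _ _ (integrableZl _ (`|a0| + delta)%R habs_int)) => //.
    by apply/measurable_realfun.measurable_EFinP; exact: measurable_realfun.measurable_funM.
  move=> w _; rewrite -EFinM !abse_EFin lee_fin !normrM normr_id.
  by rewrite ler_wpM2r // (le_trans (alpha_abs w)) // ler_norm.
have pointwise w : (alpha w * h w <= a0 * h w + delta * `|h w|)%R.
  have /andP[lo hi] := alpha_range w.
  have : ((alpha w - a0) * h w <= (alpha w - a0) * `|h w|)%R.
    by rewrite ler_wpM2l ?subr_ge0 // ler_norm.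
  have : ((alpha w - a0) * `|h w| <= delta * `|h w|)%R.
    by rewrite ler_wpM2r // lerBlDl.
  lra.
have ha0_int := integrableZl measurableT a0 h_int.
have dh_int := integrableZl measurableT delta habs_int.
apply: le_trans (le_integral measurableT ah_int (integrableD measurableT ha0_int dh_int) _) _.
  by move=> w _ /=; rewrite -!EFinM -EFinD lee_fin pointwise.
by rewrite integralD // !integralZl // h_mean mule0 add0e.
Qed.

Variable P : probability T R.

Lemma integral_le_amgm (f : T -> R) (M t : R) :
  measurable_fun setT f -> (forall w, (0 <= f w)%R) ->
  \int[P]_w (f w ^+ 2)%:E <= M%:E -> (0 < t)%R ->
  \int[P]_w (f w)%:E <= (t / 2 + (2 * t)^-1 * M)%:E.
Proof.
move=> f_meas f_ge0 f2_le t_gt0.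
have f2_meas : measurable_fun setT (fun w => f w ^+ 2)%R.
  exact: measurable_realfun.measurable_funX.
have c_ge0 : (0 <= (2 * t)^-1)%R by rewrite invr_ge0 mulr_ge0 // ltW.
have pointwise w : (f w <= t / 2 + (2 * t)^-1 * f w ^+ 2)%R.
  have := amgm_mul t 1 (f w) t_gt0.
  have -> : ((t * 1 ^+ 2 + f w ^+ 2 / t) / 2 = t / 2 + (2 * t)^-1 * f w ^+ 2)%R.
    by field; rewrite gt_eqF.
  by rewrite mul1r.
apply: le_trans (_ : _ <= \int[P]_w ((t / 2 + (2 * t)^-1 * f w ^+ 2)%:E)) _.
  apply: ge0_le_integral => //.
  - by move=> w _; rewrite lee_fin.
  - exact/measurable_realfun.measurable_EFinP.
  - apply/measurable_realfun.measurable_EFinP.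
    by apply: measurable_realfun.measurable_funD => //; exact: measurable_realfun.measurable_funM.
  - by move=> w _; rewrite lee_fin pointwise.
under eq_integral do rewrite EFinD (EFinM (2 * t)^-1).
rewrite ge0_integralD //; last 3 first.
- by move=> w _; rewrite lee_fin divr_ge0 // ltW.
- by move=> w _; rewrite mule_ge0 // lee_fin sqr_ge0.
- by apply: emeasurable_funM => //; exact/measurable_realfun.measurable_EFinP.
have P_setT : (P : measure T R) setT = 1 := probability_setT P.
rewrite integral_cst // P_setT mule1 ge0_integralZl //; last 2 first.
- exact/measurable_realfun.measurable_EFinP.
- by move=> w _; rewrite lee_fin sqr_ge0.
by rewrite EFinD leeD2l // EFinM lee_wpmul2l ?lee_fin.
Qed.

Lemma integral_le_sqrt (f : T -> R) (M : R) :
  measurable_fun setT f -> (forall w, (0 <= f w)%R) ->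
  \int[P]_w (f w ^+ 2)%:E <= M%:E -> \int[P]_w (f w)%:E <= (Num.sqrt M)%:E.
Proof.
move=> f_meas f_ge0 f2_le.
have M_ge0 : (0 <= M)%R.
  by rewrite -lee_fin (le_trans _ f2_le) // integral_ge0 // => w _; rewrite lee_fin sqr_ge0.
have fin : \int[P]_w (f w)%:E \is a fin_num.
  rewrite ge0_fin_numE; last by apply: integral_ge0 => w _; rewrite lee_fin.
  by rewrite (le_lt_trans (integral_le_amgm f M 1 f_meas f_ge0 f2_le ltr01)) ?ltry.
rewrite -(fineK fin) lee_fin -[Num.sqrt M]mul1r.
apply: le_mul_of_amgm; rewrite ?sqrtr_ge0 // => t t_gt0.
rewrite -lee_fin fineK // (le_trans (integral_le_amgm f M t f_meas f_ge0 f2_le t_gt0)) //.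
rewrite lee_fin sqr_sqrtr // expr1n mulr1 le_eqVlt; apply/orP; left; apply/eqP.
by field; rewrite gt_eqF.
Qed.

End integrals.

Section random_vector.
Context {d : measure_display} {T : measurableType d} {R : realType}.
Context {P : probability T R} {n : nat} {X : T -> 'cV[R]_n} {x : 'cV[R]_n}.

Lemma measurable_norm2_sqr_sub :
  (forall i, measurable_fun setT (fun w => X w i 0)) ->
  measurable_fun setT (fun w => norm2 (X w - x) ^+ 2).
Proof.
move=> X_meas; under eq_fun do rewrite norm2_sqr.
apply: measurable_sum => i; apply: measurable_realfun.measurable_funX.
under eq_fun do rewrite !mxE.
exact: measurable_realfun.measurable_funB.
Qed.

Lemma integral_abs_le_sqrt_moment (f : T -> R) (c M : R) :
  measurable_fun setT f -> (forall i, measurable_fun setT (fun w => X w i 0)) ->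
  0 <= c -> (forall w, `|f w| <= c * norm2 (X w - x)) ->
  (\int[P]_w ((norm2 (X w - x)) ^+ 2)%:E <= M%:E)%E ->
  (\int[P]_w `|f w|%:E <= (c * Num.sqrt M)%:E)%E.
Proof.
move=> f_meas X_meas c_ge0 f_le moment2.
have M_ge0 : 0 <= M.
  by rewrite -lee_fin (le_trans _ moment2) // integral_ge0 // => w _; rewrite lee_fin sqr_ge0.
rewrite -[c]ger0_norm // -sqrtr_sqr -sqrtrM ?sqr_ge0 //.
have absf_meas : measurable_fun setT (fun w => `|f w|).
  exact: measurableT_comp (@measurable_realfun.normr_measurable R setT) f_meas.
apply: integral_le_sqrt => //.
apply: le_trans (_ : _ <= \int[P]_w ((c ^+ 2)%:E * (norm2 (X w - x) ^+ 2)%:E))%E _.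
  apply: ge0_le_integral => //.
  - apply/measurable_realfun.measurable_EFinP.
    exact: measurable_realfun.measurable_funX.
  - apply: emeasurable_funM => //.
    exact/measurable_realfun.measurable_EFinP/measurable_norm2_sqr_sub.
  - move=> w _; rewrite -EFinM lee_fin -exprMn.
    by rewrite lerXn2r ?nnegrE ?mulr_ge0 ?sqrtr_ge0 // f_le.
rewrite ge0_integralZl ?lee_fin ?sqr_ge0 //.
- by rewrite (EFinM (c ^+ 2)) lee_wpmul2l ?lee_fin ?sqr_ge0.
- exact/measurable_realfun.measurable_EFinP/measurable_norm2_sqr_sub.
- by move=> w _; rewrite lee_fin sqr_ge0.
Qed.

Section centered.
Hypothesis X_int : forall i, P.-integrable setT (fun w => (X w i 0)%:E).

Let dotv_sub_sumE (a : 'cV[R]_n) w :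
  (dotv a (X w - x))%:E = (\sum_(i < n) (a i 0)%:E * ((X w i 0)%:E - (x i 0)%:E))%E.
Proof. by rewrite dotvE -sumEFin; apply: eq_bigr => i _; rewrite !mxE EFinM EFinB. Qed.

Let term_integrable (a : 'cV[R]_n) i :
  P.-integrable setT (fun w => (a i 0)%:E * ((X w i 0)%:E - (x i 0)%:E))%E.
Proof.
apply: integrableZl => //; apply: integrableB => //.
exact: finite_measure_integrable_cst.
Qed.

Lemma integrable_dotv_sub (a : 'cV[R]_n) :
  P.-integrable setT (fun w => (dotv a (X w - x))%:E).
Proof.
under eq_fun do rewrite dotv_sub_sumE.
by apply: integrable_sum => // i _; exact: term_integrable.
Qed.

Lemma integral_dotv_sub_mean (a : 'cV[R]_n) :
  (forall i, \int[P]_w (X w i 0)%:E = (x i 0)%:E)%E ->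
  (\int[P]_w (dotv a (X w - x))%:E = 0)%E.
Proof.
move=> X_mean; under eq_integral do rewrite dotv_sub_sumE.
rewrite integral_sum //.
apply: big1 => i _; rewrite integralZl //; last first.
  by apply: integrableB => //; exact: finite_measure_integrable_cst.
rewrite integralB_EFin //; [|exact: X_int|exact: finite_measure_integrable_cst].
have P_setT : (P : measure T R) setT = 1%E := probability_setT P.
by rewrite X_mean integral_cst // P_setT mule1 subee // mule0.
Qed.

End centered.
End random_vector.

Theorem lemma3p10
  (R : realType) (dsp : measure_display) (Omega : measurableType dsp)
  (P : probability Omega R)
  (n m : nat)
  (* deterministic data at iterate x_k *)
  (H : 'M[R]_n) (J : 'M[R]_(m, n)) (g : 'cV[R]_n) (c : 'cV[R]_m)
  (kappaH zeta kappag kappad M L Gamma sigma beta theta taumin ximin : R)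
  (* deterministic search direction d_k (and multiplier y_k) *)
  (d : 'cV[R]_n) (y : 'cV[R]_m)
  (* stochastic quantities at iteration k *)
  (gbar : Omega -> 'cV[R]_n) (dbar : Omega -> 'cV[R]_n) (ybar : Omega -> 'cV[R]_m)
  (taubar xibar alphabar : Omega -> R) :
  (* standing assumptions on H_k, J_k *)
  H^T = H ->
  (forall u : 'cV[R]_n, norm2 (H *m u) <= kappaH * norm2 u) ->
  0 < zeta ->
  (forall u : 'cV[R]_n, J *m u = 0 -> zeta * norm2 u ^+ 2 <= dotv u (H *m u)) ->
  row_free J ->
  (* kappa_d bounds the (operator 2-)norm of the inverse of the KKT matrix *)
  kkt H J \in unitmx ->
  0 < kappad ->
  (forall z : 'cV[R]_(n + m), norm2 (invmx (kkt H J) *m z) <= kappad * norm2 z) ->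
  (* kappa_g bounds ||g_k||_2 *)
  0 < kappag -> norm2 g <= kappag ->
  (* algorithm parameters *)
  0 < L -> 0 <= Gamma -> 0 < sigma < 1 -> 0 < beta <= 1 -> 0 <= theta ->
  (* deterministic and stochastic directions solve the SQP linear systems *)
  kkt H J *m col_mx d y = - col_mx g c ->
  (forall w, kkt H J *m col_mx (dbar w) (ybar w) = - col_mx (gbar w) c) ->
  (* event E_{tau,small}, at an iteration k >= kbar_{tau,xi} *)
  0 < taumin -> 0 < ximin ->
  (taumin%:E <= tau_trial sigma H c g d)%E ->
  (forall w, taubar w = taumin) ->
  (forall w, xibar w = ximin) ->
  (* stepsize lies in [alpha_min, alpha_max] *)
  measurable_fun setT alphabar ->
  (forall w, beta * xibar w * taubar w / (taubar w * L + Gamma) <= alphabar w) ->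
  (forall w, alphabar w <= beta * xibar w * taubar w / (taubar w * L + Gamma)
                            + theta * beta ^+ 2) ->
  (* conditional moments of the stochastic gradient *)
  (forall i, measurable_fun setT (fun w => gbar w i 0)) ->
  (forall i, P.-integrable setT (fun w => (gbar w i 0)%:E)) ->
  (forall i, (\int[P]_w (gbar w i 0)%:E = (g i 0)%:E)%E) ->
  0 <= M ->
  (\int[P]_w ((norm2 (gbar w - g)) ^+ 2)%:E <= M%:E)%E ->
  (\int[P]_w (alphabar w * taubar w * dotv g (dbar w - d))%:E
     <= (beta ^+ 2 * theta * taumin * kappag * kappad * Num.sqrt M)%:E)%E.
Proof.
move=> _ _ _ _ _ K_unit kappad_gt0 K_bound kappag_gt0 g_le _ _ _ _ theta_ge0 sol solbar
  taumin_gt0 _ _ taubarE xibarE alpha_meas alpha_ge alpha_le gbar_meas gbar_int gbar_mean _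
  gbar_moment.
pose a := - ((ulsubmx (invmx (kkt H J)))^T *m g).
pose h w := dotv a (gbar w - g).
have h_lin w : dotv g (dbar w - d) = h w := dotv_usub_sub_solution g K_unit (solbar w) sol.
have h_abs w : `|h w| <= kappag * kappad * norm2 (gbar w - g).
  rewrite -h_lin -mulrA; apply: le_trans (abs_dotv_le _ _) _.
  apply: ler_pM; rewrite ?norm2_ge0 //.
  exact: norm2_usub_sub_solution_le K_unit (solbar w) sol K_bound.
have h_int : P.-integrable setT (EFin \o h) := integrable_dotv_sub gbar_int a.
have h_meas : measurable_fun setT h.
  exact/measurable_realfun.measurable_EFinP/(measurable_int P h_int).
have h_abs_mean : (\int[P]_w `|h w|%:E <= (kappag * kappad * Num.sqrt M)%:E)%E :=
  integral_abs_le_sqrt_moment h _ M h_meas gbar_meas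
    (mulr_ge0 (ltW kappag_gt0) (ltW kappad_gt0)) h_abs gbar_moment.
pose a0 := beta * ximin * taumin / (taumin * L + Gamma).
have alpha_range w :
    a0 * taumin <= alphabar w * taumin <= a0 * taumin + theta * beta ^+ 2 * taumin.
  have := alpha_ge w; have := alpha_le w; rewrite taubarE xibarE -/a0 => hi lo.
  by apply/andP; split; [|rewrite -mulrDl]; apply: ler_wpM2r => //; exact: ltW.
have alpha_tau_meas : measurable_fun setT (fun w => alphabar w * taumin).
  exact: measurable_realfun.measurable_funM.
under eq_integral do rewrite taubarE h_lin.
apply: le_trans (integral_mul_centered_le P _ _ _ _ alpha_tau_meas alpha_range h_int
  (integral_dotv_sub_mean gbar_int a gbar_mean)) _.
apply: le_trans (lee_wpmul2l _ h_abs_mean) _.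
  by rewrite lee_fin (mulr_ge0 (mulr_ge0 theta_ge0 (sqr_ge0 beta)) (ltW taumin_gt0)).
by rewrite -EFinM lee_fin le_eqVlt; apply/orP; left; apply/eqP; ring.
Qed.
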